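(* Over a unary alphabet $\{a\}$, a language is accepted by some poNFA if and only if it is $\mathcal{R}$-trivial.
   Context: A poNFA is an NFA whose reachability relation on states ($p\le q$ iff $q\in p\cdot w$ for some word $w$) is a partial order. $\mathrm{sub}_k(v)$ is the set of subsequences of $v$ of length at most $k$; $u\sim_k v$ iff $\mathrm{sub}_k(u)=\mathrm{sub}_k(v)$; $x\sim^{\mathcal{R}}_k y$ iff each prefix of $x$ is $\sim_k$-equivalent to some prefix of $y$ and vice versa. A regular language is $\mathcal{R}$-trivial if it is a union of $\sim^{\mathcal{R}}_k$-classes for some $k\ge0$. *)

From mathcomp Require Import all_boot.
Set Implicit Arguments. Unset Strict Implicit. Unset Printing Implicit Defensive.

Record nfa (Sigma : finType) := Nfa {
  nfa_state : finType;
  nfa_init : {set nfa_state};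
  nfa_final : {set nfa_state};
  nfa_trans : nfa_state -> Sigma -> {set nfa_state} }.

Section NFA.
Variables (Sigma : finType) (A : nfa Sigma).

Definition nfa_step (S : {set nfa_state A}) (a : Sigma) : {set nfa_state A} :=
  \bigcup_(p in S) nfa_trans p a.

Definition nfa_run (S : {set nfa_state A}) (w : seq Sigma) : {set nfa_state A} :=
  foldl nfa_step S w.

Definition nfa_accepts (w : seq Sigma) : bool :=
  [exists q in nfa_run (nfa_init A) w, q \in nfa_final A].

Definition nfa_reach (p q : nfa_state A) : Prop :=
  exists w : seq Sigma, q \in nfa_run [set p] w.

Definition is_poNFA : Prop :=
  forall p q, nfa_reach p q -> nfa_reach q p -> p = q.
End NFA.

Definition language (Sigma : finType) := seq Sigma -> Prop.

Definition accepted_by (Sigma : finType) (A : nfa Sigma) (L : language Sigma) : Prop :=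
  forall w, L w <-> nfa_accepts A w.

Definition regular (Sigma : finType) (L : language Sigma) : Prop :=
  exists A : nfa Sigma, accepted_by A L.

Definition sim_k (Sigma : finType) (k : nat) (u v : seq Sigma) : Prop :=
  forall w : seq Sigma, size w <= k -> subseq w u = subseq w v.

Definition simR_k (Sigma : finType) (k : nat) (x y : seq Sigma) : Prop :=
  (forall i, i <= size x -> exists2 j, j <= size y & sim_k k (take i x) (take j y)) /\
  (forall j, j <= size y -> exists2 i, i <= size x & sim_k k (take j y) (take i x)).

Definition union_of_simR_classes (Sigma : finType) (k : nat) (L : language Sigma) : Prop :=
  forall x y, simR_k k x y -> (L x <-> L y).

Definition R_trivial (Sigma : finType) (L : language Sigma) : Prop :=
  regular L /\ exists k, union_of_simR_classes k L.

(* In a poNFA, iterating one letter a from a set of states stabilises after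
   as many steps as there are states: a state q with d strict predecessors
   (along a-transitions) has its membership fixed after d+1 steps, since every
   a-transition into q either is a self-loop or comes from a state with fewer
   strict predecessors.  Over a unary alphabet this makes acceptance depend
   only on min(|w|, n), which is also exactly what ~R_n-equivalence of unary
   words records.  Conversely, a language that only sees min(|w|, k) is
   accepted by the chain automaton 0 -> 1 -> ... -> k with a loop on k. *)

From mathcomp Require Import all_boot zify.
Set Implicit Arguments. Unset Strict Implicit. Unset Printing Implicit Defensive.

Section Runs.
Variables (Sigma : finType) (A : nfa Sigma).
Implicit Types (X Y : {set nfa_state A}) (p q : nfa_state A) (b : Sigma) (w : seq Sigma).

Lemma nfa_run_rcons X w b : nfa_run X (rcons w b) = nfa_step (nfa_run X w) b.
Proof. exact: foldl_rcons. Qed.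

Lemma mem_nfa_step X b q :
  reflect (exists2 p, p \in X & q \in nfa_trans p b) (q \in nfa_step X b).
Proof. exact: bigcupP. Qed.

Lemma nfa_step_subset X Y b : X \subset Y -> nfa_step X b \subset nfa_step Y b.
Proof.
move=> sXY; apply/subsetP => q /mem_nfa_step [p pX qp].
by apply/mem_nfa_step; exists p; first exact: (subsetP sXY).
Qed.

Lemma nfa_run_subset X Y w : X \subset Y -> nfa_run X w \subset nfa_run Y w.
Proof. by elim: w X Y => [|b w IHw] X Y //= sXY; apply/IHw/nfa_step_subset. Qed.

Definition nfa_edge b : rel (nfa_state A) := fun p q => q \in nfa_trans p b.

Lemma connect_nfa_reach b p q : connect (nfa_edge b) p q -> nfa_reach p q.
Proof.
case/connectP => s; elim: s p => [|r s IHs] p /=.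
  by move=> _ ->; exists [::]; rewrite set11.
case/andP => pr /IHs /[apply] -[w qw]; exists (b :: w).
apply: subsetP qw; apply: nfa_run_subset; rewrite sub1set.
by apply/mem_nfa_step; exists p; rewrite ?set11.
Qed.

Section PoNFA.
Hypothesis poA : is_poNFA A.
Variable a : Sigma.

Definition strict_pred q : {set nfa_state A} :=
  [set p | (p != q) && connect (nfa_edge a) p q].

Lemma strict_pred_proper p q : p \in strict_pred q -> strict_pred p \proper strict_pred q.
Proof.
rewrite inE => /andP [npq pq]; apply/properP; split.
  apply/subsetP => r; rewrite !inE => /andP [nrp rp].
  rewrite (connect_trans rp pq) andbT; apply: contraNneq npq => erq.
  by rewrite -erq in pq *; rewrite (poA (connect_nfa_reach pq) (connect_nfa_reach rp)).
by exists p; rewrite !inE ?eqxx ?npq.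
Qed.

Lemma card_strict_pred q : #|strict_pred q| < #|nfa_state A|.
Proof.
rewrite -cardsT; apply/proper_card/properP; split; first exact: subsetT.
by exists q; rewrite !inE ?eqxx.
Qed.

Lemma nfa_run_nseqS X n : nfa_run X (nseq n.+1 a) = nfa_step (nfa_run X (nseq n a)) a.
Proof. by rewrite -addn1 nseqD cats1 nfa_run_rcons. Qed.

Lemma mem_nfa_run_nseq_stable X q n : #|strict_pred q| < n ->
  (q \in nfa_run X (nseq n a)) = (q \in nfa_run X (nseq n.+1 a)).
Proof.
have [h] := ubnP #|strict_pred q|; elim: h q n => // h IHh q [//|m] /ltnSE hq hm.
have IHp p : q \in nfa_trans p a -> p != q ->
    (p \in nfa_run X (nseq m a)) = (p \in nfa_run X (nseq m.+1 a)).
  move=> qp npq; have /strict_pred_proper/proper_card ltpq : p \in strict_pred q.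
    by rewrite inE npq connect1.
  by apply: IHh; lia.
rewrite [in RHS]nfa_run_nseqS !nfa_run_nseqS.
apply/mem_nfa_step/mem_nfa_step => -[p pS qp].
- have [epq | npq] := eqVneq p q.
    by rewrite -epq in qp *; exists p => //; apply/mem_nfa_step; exists p.
  by exists p; rewrite // -nfa_run_nseqS -IHp.
- have [epq | npq] := eqVneq p q.
    by move: pS; rewrite epq => /mem_nfa_step.
  by exists p; rewrite // IHp // nfa_run_nseqS.
Qed.

Lemma nfa_run_nseq_stable X n : #|nfa_state A| <= n ->
  nfa_run X (nseq n a) = nfa_run X (nseq #|nfa_state A| a).
Proof.
move=> hn; rewrite -(subnKC hn); elim: (n - _) => [|d IHd]; first by rewrite addn0.
apply/setP => q; rewrite addnS -mem_nfa_run_nseq_stable ?IHd //.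
exact: leq_trans (card_strict_pred q) (leq_addr _ _).
Qed.

End PoNFA.
End Runs.

Section Unary.
Variables (Sigma : finType) (a : Sigma).
Hypothesis unary : forall b : Sigma, b = a.
Implicit Types (u v w x y : seq Sigma) (k : nat).

Lemma unary_word w : w = nseq (size w) a.
Proof. by apply/all_pred1P; apply/allP => b _ /=; rewrite [b]unary. Qed.

Lemma unary_subseq u v : subseq u v = (size u <= size v).
Proof.
rewrite [u]unary_word [v]unary_word !size_nseq.
case: leqP => [le_uv | lt_vu].
  by rewrite -(subnKC le_uv) nseqD prefix_subseq.
by apply: contraTF lt_vu => /size_subseq; rewrite !size_nseq -leqNgt.
Qed.

Lemma unary_sim_k k u v : sim_k k u v <-> minn (size u) k = minn (size v) k.
Proof.
split => [sub_uv | eq_uv w le_wk]; last by rewrite !unary_subseq; apply/idP/idP; lia.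
have sizes m : m <= k -> (m <= size u) = (m <= size v).
  by move=> le_mk; have := sub_uv (nseq m a); rewrite !unary_subseq size_nseq; apply.
move: (sizes _ (geq_minr (size u) k)) (sizes _ (geq_minr (size v) k)).
rewrite !geq_minl => /esym le_uv le_vu; lia.
Qed.

Lemma unary_simR_k k x y : simR_k k x y <-> minn (size x) k = minn (size y) k.
Proof.
have prefixes x' y' : minn (size x') k <= minn (size y') k ->
    forall i, i <= size x' -> exists2 j, j <= size y' & sim_k k (take i x') (take j y').
  move=> le_xy i le_ix; exists (minn i k); first lia.
  by apply/unary_sim_k; rewrite !size_takel //; lia.
split => [[sub_xy sub_yx] | eq_xy]; last by split; apply: prefixes; lia.
have [j le_jy /unary_sim_k] := sub_xy _ (leqnn _).
have [i le_ix /unary_sim_k] := sub_yx _ (leqnn _).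
by rewrite !take_size !size_takel //; lia.
Qed.

Lemma poNFA_accepts_unary (A : nfa Sigma) : is_poNFA A ->
  forall w, nfa_accepts A w = nfa_accepts A (nseq (minn (size w) #|nfa_state A|) a).
Proof.
move=> poA w; rewrite /nfa_accepts {1}[w]unary_word.
by case: leqP => // /ltnW lt_nw; rewrite nfa_run_nseq_stable.
Qed.

End Unary.

Section TruncatedLength.
Variables (Sigma : finType) (k : nat) (f : nat -> bool).

Definition trunc_length_nfa : nfa Sigma :=
  @Nfa Sigma 'I_k.+1 [set ord0] [set i : 'I_k.+1 | f i]
    (fun i _ => [set inord (minn i.+1 k)]).

Lemma trunc_length_nfa_run (i : 'I_k.+1) (w : seq Sigma) :
  nfa_run [set i : nfa_state trunc_length_nfa] w = [set inord (minn (i + size w) k)].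
Proof.
elim: w i => [|b w IHw] i /=; first by rewrite addn0 (minn_idPl (leq_ord i)) inord_val.
rewrite /nfa_step big_set1 IHw inordK ?ltnS ?geq_minr //; congr [set inord _]; lia.
Qed.

Lemma trunc_length_nfa_accepts w : nfa_accepts trunc_length_nfa w = f (minn (size w) k).
Proof.
rewrite /nfa_accepts trunc_length_nfa_run /=.
apply/existsP/idP => [[q /andP [/set1P -> ]] | fw].
  by rewrite inE inordK ?ltnS ?geq_minr.
by exists (inord (minn (size w) k)); rewrite set11 inE inordK ?ltnS ?geq_minr.
Qed.

Lemma trunc_length_nfa_po : is_poNFA trunc_length_nfa.
Proof.
have reach_leq (p q : nfa_state trunc_length_nfa) : nfa_reach p q -> (p : nat) <= q.
  case=> w; rewrite trunc_length_nfa_run inE => /eqP ->.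
  by rewrite inordK ?ltnS ?geq_minr //; have := leq_ord p; lia.
by move=> p q pq qp; apply/val_inj/eqP; rewrite eqn_leq !reach_leq.
Qed.

End TruncatedLength.

Theorem mainTheorem10 (Sigma : finType) (unary : #|Sigma| = 1) (L : language Sigma) :
  (exists A : nfa Sigma, is_poNFA A /\ accepted_by A L) <-> R_trivial L.
Proof.
have [a unary_a] : exists a : Sigma, forall b, b = a.
  have /card1P [a Sigma_a] : #|Sigma| == 1 by rewrite unary.
  by exists a => b; apply/eqP; have := Sigma_a b; rewrite !inE.
split => [[A [poA accA]] | [[B accB] [k simRL]]].
  split; first by exists A.
  exists #|nfa_state A| => x y /(unary_simR_k unary_a) eq_xy.
  rewrite !accA (poNFA_accepts_unary unary_a poA x).
  by rewrite (poNFA_accepts_unary unary_a poA y) eq_xy.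
(* [L] is Prop-valued; the automaton [B] witnessing regularity decides it. *)
exists (trunc_length_nfa Sigma k (fun i => nfa_accepts B (nseq i a))).
split => [|w]; first exact: trunc_length_nfa_po.
rewrite trunc_length_nfa_accepts; apply: iff_trans (simRL _ _ _) (accB _).
by apply/(unary_simR_k unary_a); rewrite size_nseq -minnA minnn.
Qed.
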